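(* Let $P$ be a rooted forest on $[n]$ with natural labeling. For $1\le i\le n$ let $G_i$ be the $\mathcal{L}(P)\times\mathcal{L}(P)$ $0$-$1$ matrix with $G_i(\pi',\pi)=1$ if and only if $\pi'=\pi\partial_{\pi^{-1}_i}$. Then the monoid $\mathcal{M}$ generated by $G_1,\dots,G_n$ under matrix multiplication is $\mathcal{R}$-trivial.
   Context: A rooted forest is a disjoint union of rooted trees, a rooted tree being a connected finite poset in which each element is covered by at most one element. $\mathcal{L}(P)=\{\pi\in S_n : i\prec j \Rightarrow \pi^{-1}_i<\pi^{-1}_j\}$ in one-line notation. $\pi\tau_i$ ($1\le i<n$) swaps $\pi_i,\pi_{i+1}$ if they are incomparable in $P$ and is $\pi$ otherwise; operators act on the right; $\partial_j=\tau_j\tau_{j+1}\cdots\tau_{n-1}$. (Equivalently $G_i$ is $\overline{M}=M+(x_1+\cdots+x_n)\mathbb{1}$ evaluated at $x_i=1$, $x_j=0$ for $j\ne i$, where $M$ is the promotion graph transition matrix.) A finite monoid $\mathcal{M}$ (with identity) is $\mathcal{R}$-trivial if $x\mathcal{M}=y\mathcal{M}$ implies $x=y$ for all $x,y\in\mathcal{M}$. *)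

From mathcomp Require Import all_boot all_order all_algebra all_fingroup.
Set Implicit Arguments. Unset Strict Implicit. Unset Printing Implicit Defensive.
Import GRing.Theory.
Local Open Scope ring_scope.

(* Posets on [n] are represented on 'I_n (element k stands for k+1),
   given by a boolean (reflexive) order relation [le]. *)
Section Promotion.
Variables (n : nat) (le : rel 'I_n).

Definition plt (x y : 'I_n) : bool := (x != y) && le x y.

Definition is_poset : Prop :=
  [/\ reflexive le, antisymmetric le & transitive le].

Definition covers (x y : 'I_n) : bool :=
  plt x y && [forall z, ~~ (plt x z && plt z y)].

(* rooted forest: every element is covered by at most one element
   (every finite poset is the disjoint union of its connected components,
   each of which then is a rooted tree) *)
Definition rooted_forest : Prop :=
  forall x y z, covers x y -> covers x z -> y = z.

Definition natural_labeling : Prop :=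
  forall i j, plt i j -> (i < j)%N.

Definition incomparable (x y : 'I_n) : bool := ~~ le x y && ~~ le y x.

(* One-line notation: pi_k = pi k (position k, 0-based); pi^-1_i = (pi^-1) i
   is the position of i. *)
Definition lin_ext (pi : 'S_n) : bool :=
  [forall i, forall j, plt i j ==> ((pi^-1)%g i < (pi^-1)%g j)%N].

Definition LP := [pred pi : 'S_n | lin_ext pi].

(* pi tau_(k+1) (0-based k): swap the entries at positions k, k+1 if they
   are incomparable; otherwise pi.  (tperm a b * pi)%g maps x to
   pi (tperm a b x). *)
Definition tau (pi : 'S_n) (k : nat) : 'S_n :=
  match insub k, insub k.+1 with
  | Some a, Some b =>
      if incomparable (pi a) (pi b) then (tperm a b * pi)%g else pi
  | _, _ => pi
  end.

(* pi partial_(p+1) = pi tau_(p+1) tau_(p+2) ... tau_(n-1), operators acting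
   on the right, p 0-based (so tau indices p, ..., n-2 0-based). *)
Definition partial (pi : 'S_n) (p : nat) : 'S_n :=
  foldl tau pi (iota p (n.-1 - p)).

Definition promo (i : 'I_n) (pi : 'S_n) : 'S_n := partial pi ((pi^-1)%g i).

(* Matrices indexed by L(P) x L(P) (via the enumeration enum_val of L(P)). *)
Definition Gmat (i : 'I_n) : 'M[int]_#|LP| :=
  \matrix_(a, b) ((enum_val a == promo i (enum_val b)) %:R).

Definition in_gen_monoid (A : 'M[int]_#|LP|) : Prop :=
  exists s : seq 'I_n, A = foldr (fun i B => Gmat i *m B) 1%:M s.

End Promotion.

(* R-triviality of a monoid of square matrices given by its membership
   predicate: xM = yM implies x = y. *)
Definition R_trivial (m : nat) (Mon : 'M[int]_m -> Prop) : Prop :=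
  forall x y, Mon x -> Mon y ->
    (forall A, (exists z, Mon z /\ A = x *m z) <-> (exists w, Mon w /\ A = y *m w)) ->
    x = y.

From mathcomp Require Import all_boot all_order all_algebra all_fingroup.
From mathcomp Require Import zify.
Set Implicit Arguments. Unset Strict Implicit. Unset Printing Implicit Defensive.
Import GRing.Theory.

(* In a rooted forest the elements above [i] form a chain up to a root, and
   bubbling through [partial] pushes each of them one step up this chain (the
   root going to the end), the other elements keeping their relative order.
   Hence the relative order of [pi] acted on by a word is read off from
   [pi] by following each element up its chain.  Under [(ab)^n], every
   element either leaves for the end or reaches a place fixed by [a] and [b],
   because each pass that moves it raises its label; so [(ab)^n a = (ab)^n],
   and this identity forces [R]-triviality: from [x = y w], [y = x z] one
   gets [x = x (zw)^n] and then [y = x (zw)^n z = x]. *)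

Section RootedForest.
Variables (n : nat) (le : rel 'I_n).
Hypotheses (le_po : is_poset le) (le_forest : rooted_forest le)
  (le_natural : natural_labeling le).

Lemma le_refl x : le x x. Proof. by case: le_po. Qed.

Lemma le_trans x y z : le x y -> le y z -> le x z.
Proof. by case: le_po => _ _; apply. Qed.

Lemma le_anti x y : le x y -> le y x -> x = y.
Proof. by case: le_po => _ anti _ lexy leyx; apply: anti; rewrite lexy leyx. Qed.

Lemma le_plt_trans x y z : le x y -> plt le y z -> plt le x z.
Proof.
move=> lexy /andP[nyz leyz]; rewrite /plt (le_trans lexy leyz) andbT.
by apply: contra_neq nyz => exz; apply: (le_anti leyz); rewrite -exz.
Qed.

Lemma plt_le x y : plt le x y -> le x y. Proof. by case/andP. Qed.

Lemma plt_ltn x y : plt le x y -> (x < y)%N. Proof. exact: le_natural. Qed.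

Lemma covers_plt x y : covers le x y -> plt le x y. Proof. by case/andP. Qed.

Lemma exists_cover x z : plt le x z -> exists2 y, covers le x y & le y z.
Proof.
move=> ltxz; have ltxz_lezz : plt le x z && le z z by rewrite ltxz le_refl.
have [y /andP[ltxy leyz] ymin] :=
  @arg_minnP _ z (fun y => plt le x y && le y z) val ltxz_lezz.
exists y => //; rewrite /covers ltxy; apply/forallP => w.
apply/negP => /andP[ltxw ltwy].
have := ymin w; rewrite ltxw (le_trans (plt_le ltwy) leyz) => /(_ isT).
by move=> /=; have := plt_ltn ltwy; lia.
Qed.

Lemma above_total i a b : le i a -> le i b -> le a b || le b a.
Proof.
have [k] := ubnP (n - i); elim: k i => [//|k IHk] i bound_i leia leib.
case: (eqVneq a i) => [->|nai]; first by rewrite leib.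
case: (eqVneq b i) => [->|nbi]; first by rewrite leia orbT.
have [y coviy leya] : exists2 y, covers le i y & le y a.
  by apply: exists_cover; rewrite /plt eq_sym nai leia.
have [y' coviy' leyb] : exists2 y, covers le i y & le y b.
  by apply: exists_cover; rewrite /plt eq_sym nbi leib.
rewrite -(le_forest coviy coviy') in leyb.
apply: (IHk y) => //.
by have := plt_ltn (covers_plt coviy); have := ltn_ord y; lia.
Qed.

Definition parent (e : 'I_n) : option 'I_n := [pick y | covers le e y].

Lemma parentP e y : parent e = Some y -> covers le e y.
Proof. by rewrite /parent; case: pickP => // y' covy' [<-]. Qed.

Lemma parent_cover e y : covers le e y -> parent e = Some y.
Proof.
rewrite /parent => coey; case: pickP => [y' coey'|/(_ y)]; last by rewrite coey.
by rewrite (le_forest coey' coey).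
Qed.

Definition pos (pi : 'S_n) (e : 'I_n) : nat := (pi^-1)%g e.

Lemma pos_lt pi e : (pos pi e < n)%N. Proof. exact: ltn_ord. Qed.

Lemma pos_inj pi : injective (pos pi).
Proof. by move=> x y /val_inj /perm_inj. Qed.

Lemma posK pi (k : 'I_n) : pos pi (pi k) = k.
Proof. by rewrite /pos permK. Qed.

Lemma perm_at_pos (pi : 'S_n) e (k : 'I_n) : pos pi e = k -> pi k = e.
Proof. by move=> /val_inj <-; rewrite permKV. Qed.

Lemma pos_tpermM (pi : 'S_n) a b e :
  pos (tperm a b * pi)%g e = tperm a b ((pi^-1)%g e).
Proof. by rewrite /pos invMg tpermV permM. Qed.

Lemma lin_extP pi :
  reflect (forall a b, plt le a b -> (pos pi a < pos pi b)%N) (lin_ext le pi).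
Proof.
apply: (iffP forallP) => [lin a b|lin a]; last by apply/forallP => b; apply/implyP/lin.
by have /forallP/(_ b)/implyP := lin a.
Qed.

Lemma card_ord_lt k : (k <= n)%N -> #|[pred j : 'I_n | (j < k)%N]| = k.
Proof.
elim: k => [|k IHk] k_le; first by apply: eq_card0.
rewrite (cardD1 (Ordinal k_le)) inE /= ltnSn add1n.
congr _.+1; rewrite -[RHS](IHk (ltnW k_le)); apply: eq_card => j.
by rewrite !inE -val_eqE /= ltnS leq_eqVlt; case: ltngtP.
Qed.

Lemma card_pos_lt (pi : 'S_n) e : #|[pred e' | (pos pi e' < pos pi e)%N]| = pos pi e.
Proof.
rewrite -[RHS](card_ord_lt (ltnW (pos_lt pi e))) -cardsE.
rewrite -(card_preimset _ (@perm_inj _ pi)).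
by apply: eq_card => j; rewrite !inE posK.
Qed.

Lemma eq_perm_pos_lt (pi sigma : 'S_n) :
  (forall e e', (pos pi e < pos pi e')%N = (pos sigma e < pos sigma e')%N) -> pi = sigma.
Proof.
move=> same_order; apply/invg_inj/permP => e; apply: val_inj.
rewrite -[LHS]/(pos pi e) -[RHS]/(pos sigma e) -card_pos_lt -[RHS]card_pos_lt.
by apply: eq_card => j; rewrite !inE same_order.
Qed.

Lemma tau_at (w : 'S_n) (a b : 'I_n) : val b = a.+1 ->
  tau le w a = if incomparable le (w a) (w b) then (tperm a b * w)%g else w.
Proof.
move=> vb; rewrite /tau (insubT (fun m => m < n)%N (ltn_ord a)) -vb.
rewrite (insubT (fun m => m < n)%N (ltn_ord b)) /=.
have subK (k : 'I_n) : Sub (val k) (ltn_ord k) = k by apply: val_inj.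
by rewrite !subK.
Qed.

Definition opt_pos (pi : 'S_n) (o : option 'I_n) : nat :=
  if o is Some u then pos pi u else n.

Section Bubble.
Variables (pi : 'S_n) (i : 'I_n).
Hypothesis pi_lin : lin_ext le pi.

Lemma le_pos a b : le a b -> (pos pi a <= pos pi b)%N.
Proof.
move=> leab; case: (eqVneq a b) => [->//|nab].
by apply/ltnW/(lin_extP _ pi_lin); rewrite /plt nab.
Qed.

Definition climb (c e : 'I_n) : 'I_n :=
  if le i e && plt le e c then odflt e (parent e) else e.

Definition shift_pos (q r : nat) : nat := if (pos pi i < r <= q)%N then r.-1 else r.

Definition bubble_pos (c : 'I_n) (q : nat) (e : 'I_n) : nat :=
  if e == c then q else shift_pos q (pos pi (climb c e)).

(* [w] is [pi] acted on by the [tau]s at positions [pos pi i, ..., q - 1]: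
   the carried element [c] sits at [q], and every other [e] sits where
   [climb c e] sat in [pi], one step further left if that place lies in
   [(pos pi i, q]]. *)
Definition bubble_inv (q : nat) (w : 'S_n) (c : 'I_n) : Prop :=
  [/\ (q < n)%N, le i c, (pos pi c <= q)%N,
      (forall e, (pos pi c < pos pi e <= q)%N -> incomparable le c e)
    & forall e, pos w e = bubble_pos c q e].

Lemma bubble_inv_start : bubble_inv (pos pi i) pi i.
Proof.
split=> //; [exact: pos_lt | exact: le_refl | by move=> e; lia |].
move=> e; rewrite /bubble_pos /shift_pos /climb; case: eqVneq => [->//|nei].
have -> : le i e && plt le e i = false.
  by apply/negbTE/negP => /andP[leie /andP[+ leei]]; rewrite (le_anti leie leei) eqxx.
by case: ifP => //; lia.
Qed.

Lemma climb_cover c e : le i e -> plt le e c -> covers le e (climb c e).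
Proof.
rewrite /climb => -> ltec /=; rewrite ltec.
by have [y /parent_cover -> //] := exists_cover ltec.
Qed.

Lemma climbE c e : climb c e = e \/ [/\ le i e, plt le e c & covers le e (climb c e)].
Proof.
case lee: (le i e && plt le e c); last by left; rewrite /climb lee.
by move: lee => /andP[leie ltec]; right; split => //; apply: climb_cover.
Qed.

Lemma shift_pos_succ q r : r != q.+1 -> shift_pos q.+1 r = shift_pos q r.
Proof. by rewrite /shift_pos; case: ifP; case: ifP; lia. Qed.

Section Step.
Variables (q : nat) (w : 'S_n) (c : 'I_n).
Hypotheses (inv : bubble_inv q w c) (q1_lt : (q.+1 < n)%N).

Let a : 'I_n := Ordinal (ltnW q1_lt).
Let b : 'I_n := Ordinal q1_lt.
Let y := pi b.

Let pos_y : pos pi y = q.+1. Proof. by rewrite posK. Qed.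

Let w_a : w a = c.
Proof. by case: inv => _ _ _ _ posw; apply: perm_at_pos; rewrite posw /bubble_pos eqxx. Qed.

Let y_neq_c : y != c.
Proof. by case: inv => _ _ cq _ _; apply/eqP => yc; move: cq; rewrite -yc pos_y ltnn. Qed.

Let climb_y : climb c y = y.
Proof.
rewrite /climb; case: ifP => // /andP[_ /(lin_extP _ pi_lin)]; rewrite pos_y.
by case: inv => _ _ cq _ _; lia.
Qed.

Let w_b : w b = y.
Proof.
case: inv => _ _ cq _ posw; apply: perm_at_pos.
rewrite posw /bubble_pos (negbTE y_neq_c) climb_y pos_y /shift_pos.
by case: ifP => //; lia.
Qed.

Let bubble_pos_y q' : (pos pi i <= q')%N -> bubble_pos c q' y = shift_pos q' q.+1.
Proof. by rewrite /bubble_pos (negbTE y_neq_c) climb_y pos_y. Qed.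

Lemma bubble_step_incomparable :
  incomparable le c y -> bubble_inv q.+1 (tperm a b * w)%g c.
Proof.
case: inv => q_lt leic cq incq posw incy; have le_ic := le_pos leic.
split=> //; first by lia.
  move=> e /andP[lt_ce le_eq1]; case: (eqVneq (pos pi e) q.+1) => [pe|ne].
    by rewrite (pos_inj (etrans pe (esym pos_y))).
  by apply: incq; lia.
move=> e; rewrite pos_tpermM.
case: (eqVneq e c) => [->|nec].
  by rewrite -w_a permK tpermL /bubble_pos eqxx.
case: (eqVneq e y) => [->|ney].
  rewrite bubble_pos_y; last by lia.
  by rewrite -{1}w_b permK tpermR /shift_pos /=; case: ifP; lia.
rewrite tpermD; first last.
- by apply: contra_neq ney => /(congr1 w); rewrite permKV w_b.
- by apply: contra_neq nec => /(congr1 w); rewrite permKV w_a.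
rewrite -/(pos w e) posw /bubble_pos (negbTE nec) shift_pos_succ //.
apply/eqP; rewrite -pos_y => /pos_inj climb_e.
case: (climbE c e) => [clim_e|[leie ltec]]; first by rewrite -climb_e clim_e eqxx in ney.
rewrite climb_e => /covers_plt/plt_le leey.
move: incy; rewrite /incomparable.
by case/orP: (above_total (plt_le ltec) leey) => ->; rewrite ?andbF.
Qed.

Lemma comparable_covers : ~~ incomparable le c y -> covers le c y.
Proof.
case: inv => _ _ cq incq _ compy.
have ltcy : plt le c y.
  move: compy; rewrite /incomparable negb_and !negbK => /orP[lecy|leyc].
    by rewrite /plt eq_sym y_neq_c.
  have /(lin_extP _ pi_lin) : plt le y c by rewrite /plt y_neq_c.
  by rewrite pos_y; lia.
rewrite /covers ltcy; apply/forallP => z; apply/negP => /andP[ltcz ltzy].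
have := incq z; rewrite (lin_extP _ pi_lin _ _ ltcz) /incomparable (plt_le ltcz).
by have := lin_extP _ pi_lin _ _ ltzy; rewrite pos_y => lt /(_ ltac:(lia)).
Qed.

Lemma bubble_step_comparable :
  ~~ incomparable le c y -> bubble_inv q.+1 w y.
Proof.
move=> /comparable_covers covcy; have ltcy := covers_plt covcy.
case: inv => q_lt leic cq incq posw; have le_ic := le_pos leic.
split=> //; first exact: le_trans leic (plt_le ltcy).
- by rewrite pos_y.
- by move=> e; rewrite pos_y; lia.
move=> e; rewrite posw.
case: (eqVneq e y) => [->|ney].
  rewrite bubble_pos_y; last by lia.
  by rewrite /bubble_pos eqxx /shift_pos; case: ifP; lia.
case: (eqVneq e c) => [->|nec].
  rewrite /bubble_pos eqxx eq_sym (negbTE y_neq_c) /climb leic ltcy /=.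
  by rewrite (parent_cover covcy) pos_y /shift_pos; case: ifP; lia.
have climb_e : climb y e = climb c e.
  rewrite /climb; congr (if _ then _ else _); case leie: (le i e) => //=.
  apply/idP/idP => [ltey|ltec].
    rewrite /plt nec /=; case/orP: (above_total leie leic) => // lece.
    have ltce : plt le c e by rewrite /plt eq_sym nec.
    by move: covcy => /andP[_ /forallP/(_ e)]; rewrite ltce ltey.
  by rewrite /plt ney (le_trans (plt_le ltec) (plt_le ltcy)).
rewrite /bubble_pos (negbTE ney) (negbTE nec) climb_e shift_pos_succ //.
apply/eqP; rewrite -pos_y => /pos_inj climb_ce.
case: (climbE c e) => [clim_e|[_ ltec]]; first by rewrite -climb_ce clim_e eqxx in ney.
rewrite climb_ce => /andP[_ /forallP/(_ c)].
by rewrite ltec ltcy.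
Qed.

Lemma bubble_step : exists c', bubble_inv q.+1 (tau le w q) c'.
Proof.
rewrite (tau_at w (a := a) (b := b)) // w_a w_b.
case: ifP => [incy|/negbT compy].
  by exists c; apply: bubble_step_incomparable.
by exists y; apply: bubble_step_comparable.
Qed.

End Step.

Lemma bubble_inv_promo : exists c, bubble_inv n.-1 (promo le i pi) c.
Proof.
have pos_i := pos_lt pi i.
suff inv_k k : (k <= n.-1 - pos pi i)%N ->
    exists c, bubble_inv (pos pi i + k) (foldl (tau le) pi (iota (pos pi i) k)) c.
  by have [c] := inv_k _ (leqnn _); rewrite subnKC; [exists c | lia].
elim: k => [|k IHk] k_le; first by exists i; rewrite addn0; apply: bubble_inv_start.
have [c inv_c] := IHk (ltnW k_le).
rewrite -addn1 iotaD foldl_cat addn1 addnS /=.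
by apply: bubble_step inv_c _; lia.
Qed.

(* Promotion at [i] orders the elements as their slots were ordered in [pi],
   [None] coming last. *)
Definition promo_slot (e : 'I_n) : option 'I_n := if le i e then parent e else Some e.

Lemma promo_slot_neq e : promo_slot e != Some i.
Proof.
rewrite /promo_slot; case: ifP => [leie|]; last by apply: contraFneq => -[->]; rewrite le_refl.
apply/eqP => /parentP/covers_plt/andP[nei leei].
by rewrite (le_anti leei leie) eqxx in nei.
Qed.

Lemma bubble_inv_end w c : bubble_inv n.-1 w c ->
  promo_slot c = None /\ forall e, e != c -> promo_slot e = Some (climb c e).
Proof.
case=> _ leic _ incq _.
have c_max z : ~~ plt le c z.
  apply/negP => ltcz; have := incq z; rewrite /incomparable (plt_le ltcz) /=.
  by have := lin_extP _ pi_lin _ _ ltcz; have := pos_lt pi z; lia.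
split.
  rewrite /promo_slot leic; case pc: (parent c) => [y|//].
  by have := c_max y; rewrite (covers_plt (parentP pc)).
move=> e nec; rewrite /promo_slot /climb; case: ifP => //= leie.
case/orP: (above_total leie leic) => lece; last first.
  by have := c_max e; rewrite /plt eq_sym nec lece.
have ltec : plt le e c by rewrite /plt nec.
by rewrite ltec; have [y /parent_cover ->] := exists_cover ltec.
Qed.

Lemma promo_pos_lt e e' :
  (pos (promo le i pi) e < pos (promo le i pi) e')%N =
  (opt_pos pi (promo_slot e) < opt_pos pi (promo_slot e'))%N.
Proof.
have [c inv_c] := bubble_inv_promo; have [slot_c slot_e] := bubble_inv_end inv_c.
case: inv_c => _ _ _ _ posw; rewrite !posw.
have climb_neq x : x != c -> pos pi (climb c x) != pos pi i.
  by move=> nxc; apply: contra_neq (promo_slot_neq x) => /pos_inj <-; rewrite slot_e.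
have := pos_lt pi i; have := pos_lt pi (climb c e); have := pos_lt pi (climb c e').
rewrite /bubble_pos /shift_pos.
case: (eqVneq e c) => [->|nec]; case: (eqVneq e' c) => [->|nec'];
  rewrite ?slot_c ?slot_e //= ?ltnn //.
- by move: (climb_neq _ nec') => /eqP; case: ifP; lia.
- by move: (climb_neq _ nec) => /eqP; case: ifP; lia.
- by move: (climb_neq _ nec) (climb_neq _ nec') => /eqP + /eqP; do 2 case: ifP; lia.
Qed.

Lemma promo_slot_mono e e' :
  plt le e e' -> (opt_pos pi (promo_slot e) < opt_pos pi (promo_slot e'))%N.
Proof.
move=> ltee'; have lin := lin_extP _ pi_lin; rewrite /promo_slot.
case: ifP => [leie|_].
  have [y coey leye'] := exists_cover ltee'.
  rewrite (le_trans leie (plt_le ltee')) (parent_cover coey) /=.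
  case pe': (parent e') => [y'|] /=; last exact: pos_lt.
  by apply/lin/(le_plt_trans leye')/covers_plt/parentP.
case: ifP => _; last exact: lin.
case pe': (parent e') => [y'|] /=; last exact: pos_lt.
by apply/lin/(le_plt_trans (plt_le ltee'))/covers_plt/parentP.
Qed.

End Bubble.

Lemma promo_lin pi i : lin_ext le pi -> lin_ext le (promo le i pi).
Proof.
move=> pi_lin; apply/lin_extP => e e' ltee'.
by rewrite promo_pos_lt //; apply: promo_slot_mono.
Qed.

Definition promo_seq (s : seq 'I_n) (pi : 'S_n) : 'S_n := foldr (promo le) pi s.

(* Read from the last promotion applied back to the first, [seq_slot s e]
   follows [e] through the promotion slots; [inr t] records that [e] was sent
   to the end by the promotion preceded by [t] others. *)
Fixpoint seq_slot (s : seq 'I_n) (e : 'I_n) : 'I_n + nat :=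
  if s is i :: s' then
    if promo_slot i e is Some u then seq_slot s' u else inr (size s')
  else inl e.

Definition slot_pos (pi : 'S_n) (k : 'I_n + nat) : nat :=
  match k with inl u => pos pi u | inr t => n + t end.

Lemma seq_slot_inr s e t : seq_slot s e = inr t -> (t < size s)%N.
Proof. by elim: s e => [//|i s IHs] e /=; case: promo_slot => [u /IHs|[<-]] /=; lia. Qed.

Lemma promo_seq_lin s pi : lin_ext le pi -> lin_ext le (promo_seq s pi).
Proof. by move=> pi_lin; elim: s => //= i s; apply: promo_lin. Qed.

Lemma promo_seq_pos_lt s pi e e' : lin_ext le pi ->
  (pos (promo_seq s pi) e < pos (promo_seq s pi) e')%N =
  (slot_pos pi (seq_slot s e) < slot_pos pi (seq_slot s e'))%N.
Proof.
move=> pi_lin; elim: s e e' => [//|i s IHs] e e' /=.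
rewrite promo_pos_lt ?promo_seq_lin //.
case: (promo_slot i e) => [u|]; case: (promo_slot i e') => [v|] //=; rewrite ?ltnn //.
- by case su: (seq_slot s u) => [x|t] /=; have := pos_lt (promo_seq s pi) u;
    [have := pos_lt pi x | have := seq_slot_inr su]; lia.
- by case sv: (seq_slot s v) => [x|t] /=; have := pos_lt (promo_seq s pi) v;
    [have := pos_lt pi x | have := seq_slot_inr sv]; lia.
Qed.

Lemma seq_slot_cat s1 s2 e : seq_slot (s1 ++ s2) e =
  match seq_slot s1 e with inl h => seq_slot s2 h | inr t => inr (t + size s2) end.
Proof.
elim: s1 e => [//|i s1 IHs] e /=.
by case: (promo_slot i e) => [u|] //=; rewrite size_cat.
Qed.

Lemma seq_slot_le s e h : seq_slot s e = inl h -> le e h.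
Proof.
elim: s e => [|i s IHs] e /=; first by case=> <-; apply: le_refl.
rewrite /promo_slot; case: ifP => _; last exact: IHs.
case pe: (parent e) => [u|//] /IHs; apply/le_trans/plt_le/covers_plt/parentP/pe.
Qed.

Lemma seq_slot_fixed_catl s1 s2 h : seq_slot (s1 ++ s2) h = inl h -> seq_slot s1 h = inl h.
Proof.
rewrite seq_slot_cat; case s1h: (seq_slot s1 h) => [h1|//] s2h1.
by rewrite (le_anti (seq_slot_le s1h) (seq_slot_le s2h1)).
Qed.

(* Each pass through [c] that moves an element raises its label. *)
Lemma seq_slot_iter c k e h : seq_slot (flatten (nseq k c)) e = inl h ->
  seq_slot c h = inl h \/ (k <= h)%N.
Proof.
elim: k e h => [|k IHk] e h; first by right.
rewrite -addn1 nseqD flatten_cat /= cats0 seq_slot_cat.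
case sk: (seq_slot _ e) => [h0|//] ch0.
case: (eqVneq h0 h) ch0 => [<- ch0|nh0h ch0]; first by left.
right; have lth0h : plt le h0 h by rewrite /plt nh0h (seq_slot_le ch0).
case: (IHk _ _ sk) => [ch0'|]; first by move: ch0 nh0h; rewrite ch0' => -[->]; rewrite eqxx.
by have := plt_ltn lth0h; lia.
Qed.

Lemma promo_seq_absorb a b pi : lin_ext le pi ->
  promo_seq (flatten (nseq n (a ++ b)) ++ a) pi = promo_seq (flatten (nseq n (a ++ b))) pi.
Proof.
move=> pi_lin; apply: eq_perm_pos_lt => e e'.
rewrite !promo_seq_pos_lt // !seq_slot_cat.
have fixed_a x h : seq_slot (flatten (nseq n (a ++ b))) x = inl h -> seq_slot a h = inl h.
  by case/seq_slot_iter => [/seq_slot_fixed_catl //|]; have := ltn_ord h; lia.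
case ex: (seq_slot _ e) => [h|t]; case ex': (seq_slot _ e') => [h'|t'];
  rewrite ?(fixed_a _ _ ex) ?(fixed_a _ _ ex') //=.
- by have := pos_lt pi h; lia.
- by have := pos_lt pi h'; lia.
- lia.
Qed.

Local Open Scope ring_scope.

Definition word_mx (s : seq 'I_n) : 'M[int]_#|LP le| :=
  foldr (fun i B => Gmat le i *m B) 1%:M s.

Lemma word_mx_cat s1 s2 : word_mx (s1 ++ s2) = word_mx s1 *m word_mx s2.
Proof. by elim: s1 => [|i s1 IHs] /=; rewrite ?mul1mx // IHs mulmxA. Qed.

Lemma word_mx_nseq s k : word_mx (flatten (nseq k s)) = word_mx s ^+ k.
Proof. by elim: k => //= k IHk; rewrite word_mx_cat IHk exprS mulmxE. Qed.

Lemma word_mxE s :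
  word_mx s = \matrix_(a, b) (enum_val a == promo_seq s (enum_val b))%:R.
Proof.
elim: s => [|i s IHs] /=.
  by apply/matrixP => a b; rewrite !mxE (inj_eq enum_val_inj).
rewrite IHs; apply/matrixP => a b; rewrite !mxE.
have seq_in : promo_seq s (enum_val b) \in LP le by apply/promo_seq_lin/(enum_valP b).
rewrite (bigD1 (enum_rank_in seq_in (promo_seq s (enum_val b)))) //= big1; last first.
  move=> j /negbTE nj; rewrite !mxE -(enum_rankK_in seq_in seq_in) (inj_eq enum_val_inj).
  by rewrite nj mulr0.
by rewrite !mxE enum_rankK_in // eqxx mulr1 addr0.
Qed.

Lemma word_mx_absorb a b :
  (word_mx a *m word_mx b) ^+ n *m word_mx a = (word_mx a *m word_mx b) ^+ n.
Proof.
rewrite -word_mx_cat -word_mx_nseq -word_mx_cat !word_mxE.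
by apply/matrixP => u v; rewrite !mxE promo_seq_absorb //; apply: (enum_valP v).
Qed.

End RootedForest.

Local Open Scope ring_scope.

Lemma R_trivial_of_absorb (m N : nat) (Mon : 'M[int]_m -> Prop) :
  Mon 1%:M ->
  (forall A B, Mon A -> Mon B -> (A *m B) ^+ N *m A = (A *m B) ^+ N) ->
  R_trivial Mon.
Proof.
move=> Mon1 absorb x y _ _ xRy.
have [w [Mon_w x_yw]] : exists w, Mon w /\ x = y *m w.
  by apply/(xRy x); exists 1%:M; rewrite mulmx1.
have [z [Mon_z y_xz]] : exists z, Mon z /\ y = x *m z.
  by apply/(xRy y); exists 1%:M; rewrite mulmx1.
have x_fix k : x = x *m (z *m w) ^+ k.
  elim: k => [|k IHk]; first by rewrite expr0 mulmx1.
  by rewrite exprSr -mulmxE mulmxA -IHk mulmxA -y_xz -x_yw.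
by rewrite y_xz {2}(x_fix N) -mulmxA absorb // -x_fix.
Qed.

Theorem theorem6p9 (n : nat) (le : rel 'I_n) :
  is_poset le -> rooted_forest le -> natural_labeling le ->
  R_trivial (@in_gen_monoid n le).
Proof.
move=> po forest natural.
apply: (@R_trivial_of_absorb _ n) => [|_ _ [s ->] [t ->]]; first by exists [::].
by rewrite -/(word_mx le s) -/(word_mx le t) word_mx_absorb.
Qed.
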